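(* Let $S,P,Q$ be pairwise disjoint finite sets and $\mathcal{M}_{SP},\mathcal{M}_P,\mathcal{M}_{PQ}$ matroids on $S\uplus P$, $P$, $P\uplus Q$ respectively. 1. If $\mathcal{M}^1_{SP},\mathcal{M}^1_{PQ}$ are matroids on $S\uplus P$, $P\uplus Q$ with $\mathcal{M}^1_{SP}\ge\mathcal{M}_{SP}$ and $\mathcal{M}^1_{PQ}\ge\mathcal{M}_{PQ}$, then $\mathcal{M}^1_{SP}\leftrightarrow\mathcal{M}^1_{PQ}\ge\mathcal{M}_{SP}\leftrightarrow\mathcal{M}_{PQ}$. 2. $\mathcal{M}_{SP}\circ S\ge\mathcal{M}_{SP}\leftrightarrow\mathcal{M}_P\ge\mathcal{M}_{SP}\times S$. 3. If $\mathcal{M}_P=\mathcal{M}^*_{SP}\circ P$, then $\mathcal{M}_{SP}\circ S=\mathcal{M}_{SP}\leftrightarrow\mathcal{M}_P$. 4. If $\mathcal{M}_P=\mathcal{M}^*_{SP}\times P$, then $\mathcal{M}_{SP}\times S=\mathcal{M}_{SP}\leftrightarrow\mathcal{M}_P$.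
   Context: Matroids are on finite sets, given by their bases; $\mathcal{M}^*$ is the dual. $\mathcal{M}\circ T$ is the restriction (independent sets inside $T$), $\mathcal{M}\times T$ the contraction (matroid on $T$ whose bases are the minimal sets $b\cap T$, $b$ a base). $\mathbf{0}_X$ has only base $\emptyset$; $\oplus$ direct sum. For matroids on the same set, $\mathcal{M}_1\vee\mathcal{M}_2$ has bases the maximal sets $b_1\cup b_2$. $\mathcal{M}_{SP}\leftrightarrow\mathcal{M}_{PQ}:=((\mathcal{M}_{SP}\oplus\mathbf{0}_Q)\vee(\mathcal{M}_{PQ}\oplus\mathbf{0}_S))\times(S\uplus Q)$, and $\mathcal{M}_{SP}\leftrightarrow\mathcal{M}_P:=(\mathcal{M}_{SP}\vee(\mathcal{M}_P\oplus\mathbf{0}_S))\times S$. For matroids $\mathcal{M}^1,\mathcal{M}^2$ on the same set $E$, $\mathcal{M}^1\ge\mathcal{M}^2$ means: for every $T\subseteq E$, every base of $\mathcal{M}^1\circ T$ contains a base of $\mathcal{M}^2\circ T$ and every base of $\mathcal{M}^2\circ T$ is contained in a base of $\mathcal{M}^1\circ T$. *)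

(* Matroids on finite sets, represented by their family of
   bases; the ground set is a finite subset E of a finite universe T. *)
From mathcomp Require Import all_boot.
Set Implicit Arguments. Unset Strict Implicit. Unset Printing Implicit Defensive.

Section Matroids.
Variable T : finType.
Implicit Types (E A X : {set T}) (B : {set {set T}}).

Definition is_matroid E B : Prop :=
  [/\ B != set0,
      (forall b, b \in B -> b \subset E) &
      (forall b1 b2, b1 \in B -> b2 \in B -> forall x, x \in b1 :\: b2 ->
         exists2 y, y \in b2 :\: b1 & (b1 :\ x) :|: [set y] \in B)].

Definition indep B X : bool := [exists b in B, X \subset b].

Definition dual E B : {set {set T}} := [set E :\: b | b in B].

(* restriction M o A : bases are the maximal independent sets inside A *)
Definition restr B A : {set {set T}} :=
  [set X | maxset (fun Y => indep B Y && (Y \subset A)) X].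

(* contraction M x A : bases are the minimal sets b :&: A, b a base *)
Definition contr B A : {set {set T}} :=
  [set X | minset (fun Y => [exists b in B, Y == b :&: A]) X].

Definition zeroM : {set {set T}} := [set set0].

Definition dsum (B1 B2 : {set {set T}}) : {set {set T}} := [set b1 :|: b2 | b1 in B1, b2 in B2].

Definition munion (B1 B2 : {set {set T}}) : {set {set T}} :=
  [set X | maxset (fun Y => [exists b1 in B1, exists b2 in B2, Y == b1 :|: b2]) X].

(* M_SP <-> M_PQ := ((M_SP (+) 0_Q) \/ (M_PQ (+) 0_S)) x (S (+) Q) *)
Definition linkM (S Q : {set T}) (Bsp Bpq : {set {set T}}) : {set {set T}} :=
  contr (munion (dsum Bsp zeroM) (dsum Bpq zeroM)) (S :|: Q).

(* M_SP <-> M_P := (M_SP \/ (M_P (+) 0_S)) x S *)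
Definition linkP (S : {set T}) (Bsp Bp : {set {set T}}) : {set {set T}} :=
  contr (munion Bsp (dsum Bp zeroM)) S.

Definition mge E (B1 B2 : {set {set T}}) : Prop :=
  forall A, A \subset E ->
    (forall b1, b1 \in restr B1 A -> exists2 b2, b2 \in restr B2 A & b2 \subset b1) /\
    (forall b2, b2 \in restr B2 A -> exists2 b1, b1 \in restr B1 A & b2 \subset b1).

End Matroids.

From mathcomp Require Import all_boot.
From mathcomp Require Import zify.
Set Implicit Arguments. Unset Strict Implicit. Unset Printing Implicit Defensive.

(* Work with families of independent sets and their rank functions.  The
   relation M1 >= M2 holds exactly when r2 Y - r2 X <= r1 Y - r1 X for all
   X <= Y, i.e. when M2 is a quotient of M1.  Contraction to A has rank
   r (X + ~A) - r (~A), and by the matroid union theorem M1 \/ M2 has rank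
   min_(Z <= X) r1 Z + r2 Z + |X - Z|; both formulas visibly preserve the
   quotient inequality, which gives part 1.  Parts 2-4 are rank computations
   with the same two formulas, using r* Z = |Z| + r (E - Z) - r E for the
   dual. *)

Ltac case_mem := repeat match goal with |- context [?a \in ?A] => case: (a \in A) end.

Section SetFacts.
Variable T : finType.
Implicit Types (A B J K P S X Y : {set T}).

Lemma card_leq_split K X Y : K \subset X :|: Y -> #|K| <= #|K :&: X| + #|K :&: Y|.
Proof. by move=> sK; rewrite -cardsUI -setIUr (setIidPl sK) leq_addr. Qed.

Lemma cardsU_disjoint A B : [disjoint A & B] -> #|A :|: B| = #|A| + #|B|.
Proof. by move=> dAB; apply/eqP; rewrite (leq_card_setU A B). Qed.

Lemma disjoint_subset_setC A X J : X \subset A -> J \subset ~: A -> [disjoint X & J].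
Proof. by move=> sXA sJ; apply: disjointW sXA sJ _; rewrite -subsets_disjoint. Qed.

Lemma setIUC_disjoint S P X : [disjoint S & P] ->
  X \subset S -> (X :|: ~: S) :&: (S :|: P) = X :|: P.
Proof.
move=> dSP sXS; apply/setP => z; rewrite !inE.
case: (boolP (z \in X)) => [/(subsetP sXS) -> | _] //=.
by case: (boolP (z \in S)) => [/(disjointFr dSP) -> | _].
Qed.

Lemma maxset_cofinal (p q : pred {set T}) X : (forall Y, p Y -> q Y) ->
  (forall Y, q Y -> exists2 Z, p Z & Y \subset Z) -> maxset p X = maxset q X.
Proof.
move=> pq qp; apply/maxsetP/maxsetP => [[pX maxX]|[qX maxX]].
  split=> [|Y qY sXY]; first exact: pq.
  have [Z pZ sYZ] := qp Y qY; have eZX := maxX Z pZ (subset_trans sXY sYZ).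
  by apply/eqP; rewrite eqEsubset sXY -eZX sYZ.
have [Z pZ sXZ] := qp X qX; have eZX := maxX Z (pq Z pZ) sXZ.
by split=> [|Y pY sXY]; [rewrite -eZX | apply: maxX => //; apply: pq].
Qed.

End SetFacts.

(** * Independence families and rank *)

Section IndependenceMatroids.
Variable T : finType.
Implicit Types (A B D E X Y : {set T}) (F : {set {set T}}).

Record matroid F : Prop := Matroid {
  matroid0 : set0 \in F;
  matroidS : forall X Y, Y \in F -> X \subset Y -> X \in F;
  matroid_aug : forall X Y, X \in F -> Y \in F -> #|X| < #|Y| ->
    exists2 y, y \in Y :\: X & y |: X \in F }.

Definition rank F A := \max_(X | (X \in F) && (X \subset A)) #|X|.
Definition bases F := [set X | maxset (fun Y => Y \in F) X].

Variable F : {set {set T}}.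
Hypothesis mF : matroid F.

Lemma rank_indep_le X A : X \in F -> X \subset A -> #|X| <= rank F A.
Proof. by move=> FX sXA; apply: (leq_bigmax_cond X); rewrite FX sXA. Qed.

Lemma rank_attained A : exists2 X, (X \in F) && (X \subset A) & #|X| = rank F A.
Proof.
rewrite /rank (bigmax_eq_arg set0); last by rewrite matroid0 // sub0set.
by case: arg_maxnP; [rewrite matroid0 // sub0set | move=> X FX _; exists X].
Qed.

Lemma rank_leq_card A : rank F A <= #|A|.
Proof. by apply/bigmax_leqP => X /andP[_ sXA]; apply: subset_leq_card. Qed.

Lemma rankS A B : A \subset B -> rank F A <= rank F B.
Proof.
move=> sAB; apply/bigmax_leqP => X /andP[FX sXA].
by apply: rank_indep_le => //; apply: subset_trans sAB.
Qed.

Lemma rank0 : rank F set0 = 0.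
Proof. by apply/eqP; rewrite -leqn0 -(cards0 T) rank_leq_card. Qed.

Lemma indep_extend_rank X A : X \in F -> X \subset A ->
  exists2 Y, [/\ Y \in F, X \subset Y & Y \subset A] & #|Y| = rank F A.
Proof.
have [n] := ubnP (rank F A - #|X|); elim: n X => // n IH X ltn FX sXA.
have [M /andP[FM sMA] cardM] := rank_attained A.
have [leAX | ltXA] := leqP (rank F A) #|X|.
  by exists X => //; apply/eqP; rewrite eqn_leq leAX rank_indep_le.
have [y /setDP[yM yX] Fy] := matroid_aug mF FX FM ltac:(lia).
have syA : y |: X \subset A by rewrite subUset sub1set (subsetP sMA).
have [|Y [FY sYX sYA] cardY] := IH (y |: X) _ Fy syA; first by rewrite cardsU1 yX; lia.
by exists Y => //; split => //; apply: subset_trans sYX; apply: subsetUr.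
Qed.

Lemma indep_rank X : (X \in F) = (rank F X == #|X|).
Proof.
apply/idP/eqP => [FX|rankX]; first by apply/eqP; rewrite eqn_leq rank_leq_card rank_indep_le.
have [Y /andP[FY sYX] cardY] := rank_attained X.
by rewrite (_ : X = Y) //; apply/eqP; rewrite eq_sym eqEcard sYX cardY rankX leqnn.
Qed.

Lemma rank_submod A B : rank F (A :&: B) + rank F (A :|: B) <= rank F A + rank F B.
Proof.
have [I /andP[FI sI] cardI] := rank_attained (A :&: B).
have sIAB : I \subset A :|: B := subset_trans sI (subset_trans (subsetIl A B) (subsetUl A B)).
have [J [FJ sIJ sJ] cardJ] := indep_extend_rank FI sIAB.
have JA : #|J :&: A| <= rank F A.
  exact: rank_indep_le (matroidS mF FJ (subsetIl J A)) (subsetIr J A).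
have JB : #|J :&: B| <= rank F B.
  exact: rank_indep_le (matroidS mF FJ (subsetIl J B)) (subsetIr J B).
have IJAB : #|I| <= #|J :&: (A :&: B)| by apply: subset_leq_card; rewrite subsetI sIJ sI.
have := cardsUI (J :&: A) (J :&: B).
by rewrite -setIUr (setIidPl sJ) setIACA setIid; lia.
Qed.

Lemma rank_subadd A B : rank F (A :|: B) <= rank F A + rank F B.
Proof. exact: leq_trans (leq_addl _ _) (rank_submod A B). Qed.

Lemma rankU_leq A D : rank F (A :|: D) <= rank F A + #|D :\: A|.
Proof.
have -> : A :|: D = A :|: D :\: A by rewrite setDE setUIr setUCr setIT.
exact: leq_trans (rank_subadd _ _) (leq_add (leqnn _) (rank_leq_card _)).
Qed.

Lemma rank_leq_addD A B : rank F A <= rank F B + #|A :\: B|.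
Proof. exact: leq_trans (rankS (subsetUr B A)) (rankU_leq B A). Qed.

Lemma in_bases X : (X \in bases F) = (X \in F) && (#|X| == rank F setT).
Proof.
rewrite inE; apply/maxsetP/andP => [[FX maxX]|[FX /eqP cardX]].
  split=> //; have [Y [FY sXY _] <-] := indep_extend_rank FX (subsetT X).
  by rewrite (maxX Y FY sXY).
split=> // Y FY sXY; apply/eqP; rewrite eq_sym eqEcard sXY cardX.
by rewrite rank_indep_le ?subsetT.
Qed.

Lemma indep_base X : X \in F -> exists2 b, b \in bases F & X \subset b.
Proof.
move=> FX; have [Y [FY sXY _] cardY] := indep_extend_rank FX (subsetT X).
by exists Y => //; rewrite in_bases FY cardY eqxx.
Qed.

Lemma base_between b J : b \in bases F -> J \in F ->
  exists2 b', b' \in bases F & J \subset b' /\ b' \subset J :|: b.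
Proof.
rewrite in_bases => /andP[Fb /eqP cardb] FJ.
have [K [FK sJK sK] cardK] := indep_extend_rank FJ (subsetUl J b).
exists K => //; rewrite in_bases FK eqn_leq rank_indep_le ?subsetT //= cardK -cardb.
by rewrite rank_indep_le ?subsetUr.
Qed.

Lemma indep_basesE X : indep (bases F) X = (X \in F).
Proof.
apply/existsP/idP => [[b /andP[bB sXb]]|FX].
  by move: bB; rewrite in_bases => /andP[Fb _]; apply: matroidS sXb.
by have [b bB sXb] := indep_base FX; exists b; rewrite bB.
Qed.

Lemma in_restr_bases A X :
  (X \in restr (bases F) A) = [&& X \in F, X \subset A & #|X| == rank F A].
Proof.
rewrite inE; apply/maxsetP/and3P.
  rewrite indep_basesE => -[/andP[FX sXA] maxX]; split=> //.
  have [Y [FY sXY sYA] <-] := indep_extend_rank FX sXA.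
  by rewrite (maxX Y) // indep_basesE FY sYA.
move=> [FX sXA /eqP cardX]; rewrite indep_basesE FX sXA; split=> // Y.
rewrite indep_basesE => /andP[FY sYA] sXY; apply/eqP.
by rewrite eq_sym eqEcard sXY cardX rank_indep_le.
Qed.

Lemma rank_setIr A E : (forall X, X \in F -> X \subset E) -> rank F A = rank F (A :&: E).
Proof.
move=> FE; apply/eqP; rewrite eqn_leq (rankS (subsetIl A E)) andbT.
by apply/bigmax_leqP => X /andP[FX sXA]; rewrite rank_indep_le // subsetI sXA FE.
Qed.

End IndependenceMatroids.

Lemma eq_matroid_rank (T : finType) (F G : {set {set T}}) : matroid F -> matroid G ->
  (forall X, rank F X = rank G X) -> F = G.
Proof.
by move=> mF mG eq_rank; apply/setP => X; rewrite (indep_rank mF) (indep_rank mG) eq_rank.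
Qed.

(** * Matroids given by their bases, and duality *)

Section BaseFamilies.
Variables (T : finType) (E : {set T}) (BB : {set {set T}}).
Hypothesis hM : is_matroid E BB.
Implicit Types (b c I J X Y Z : {set T}).

Definition indeps (B : {set {set T}}) := [set X | indep B X].

Lemma base_toward b c I : b \in BB -> c \in BB -> I \subset b ->
  exists2 b', b' \in BB & [/\ I \subset b', b' \subset I :|: c & #|b'| = #|b|].
Proof.
case: hM => _ _ exch; move=> + cB.
have [n] := ubnP #|b :\: (I :|: c)|; elim: n b => // n IH b ltn bB sIb.
have [outside0 | [x xout]] := set_0Vmem (b :\: (I :|: c)).
  by exists b => //; split; rewrite // -setD_eq0 outside0.
have /setDP[xb] := xout; rewrite in_setU negb_or => /andP[xI xc].
have [y /setDP[yc yb] b'B] := exch _ _ bB cB x (introT setDP (conj xb xc)).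
have ltn' : #|((b :\ x) :|: [set y]) :\: (I :|: c)| < n.
  rewrite -(setD1K xout) cardsU1 setD11 add1n ltnS in ltn.
  apply: leq_ltn_trans ltn; apply: subset_leq_card; apply/subsetP => z.
  rewrite !inE; case: (z =P y) => [->|_]; first by rewrite yc orbT andbF.
  by rewrite orbF => /and3P[-> -> ->].
have sIb' : I \subset (b :\ x) :|: [set y].
  apply/subsetP => z zI; rewrite !inE (subsetP sIb) // andbT.
  by case: eqP => [zx|//]; rewrite -zx zI in xI.
have [b' b'B' [sIb'' sb' cardb']] := IH _ ltn' b'B sIb'.
exists b' => //; split=> //; rewrite cardb' setUC cardsU1 !inE negb_and yb orbT.
by rewrite (cardsD1 x b) xb.
Qed.

Lemma bases_card b c : b \in BB -> c \in BB -> #|b| = #|c|.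
Proof.
suff le_card b1 b2 : b1 \in BB -> b2 \in BB -> #|b1| <= #|b2|.
  by move=> bB cB; apply/eqP; rewrite eqn_leq !le_card.
move=> b1B b2B; have [b' _ [_ sb' <-]] := base_toward b1B b2B (sub0set b1).
by rewrite set0U in sb'; apply: subset_leq_card.
Qed.

Lemma indepsP X : reflect (exists2 b, b \in BB & X \subset b) (X \in indeps BB).
Proof. by rewrite inE; apply: exists_inP. Qed.

Lemma indeps_sub X : X \in indeps BB -> X \subset E.
Proof. by case: hM => _ sBE _ /indepsP[b bB sXb]; apply: subset_trans sXb (sBE b bB). Qed.

Lemma indeps_matroid : matroid (indeps BB).
Proof.
case: (hM) => /set0Pn[b0 b0B] _ _; split.
- by apply/indepsP; exists b0; rewrite ?sub0set.
- move=> X Y /indepsP[b bB sYb] sXY.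
  by apply/indepsP; exists b; rewrite // (subset_trans sXY).
move=> I J /indepsP[b bB sIb] /indepsP[c cB sJc] ltIJ.
have [b' b'B [sIb' sb' cardb']] := base_toward bB cB sIb.
have [no_aug | [x]] := set_0Vmem ((b' :\: I) :&: J).
  suff : #|b' :\: I| <= #|c :\: J|.
    rewrite !cardsDS // cardb' (bases_card bB cB).
    by have := subset_leq_card sJc; lia.
  apply: subset_leq_card; apply/subsetP => z /setDP[zb' zI].
  have zJ : z \notin J by apply: contraT => /negbNE zJ; rewrite -(in_set0 z) -no_aug !inE zI zb' zJ.
  by move: (subsetP sb' z zb'); rewrite !inE (negbTE zI) (negbTE zJ).
rewrite !inE => /andP[/andP[xI xb'] xJ]; exists x; first by rewrite inE xI xJ.
by apply/indepsP; exists b'; rewrite // subUset sub1set xb' sIb'.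
Qed.

Lemma bases_indeps : bases (indeps BB) = BB.
Proof.
apply/setP => X; rewrite inE; apply/maxsetP/idP => [[/indepsP[b bB sXb] maxX]|XB].
  by rewrite -(maxX b) //; apply/indepsP; exists b.
split=> [|Y /indepsP[b bB sYb] sXY]; first by apply/indepsP; exists X.
apply/eqP; rewrite eq_sym eqEcard sXY (bases_card XB bB).
exact: subset_leq_card.
Qed.

Lemma card_base_rank b : b \in BB -> #|b| = rank (indeps BB) E.
Proof.
rewrite -{1}bases_indeps (in_bases indeps_matroid) => /andP[_ /eqP->].
by rewrite (rank_setIr _ indeps_sub) setTI.
Qed.

End BaseFamilies.

Arguments indepsP {T BB X}.

Section Duality.
Variables (T : finType) (E : {set T}) (BB : {set {set T}}).
Hypothesis hM : is_matroid E BB.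
Implicit Types (b X Z : {set T}).

(* Extending (b1 :&: b2) + x to a base inside b1 + x drops exactly one y of b1; this is
   the exchange axiom of the dual. *)
Lemma exchange_toward b1 b2 x : b1 \in BB -> b2 \in BB -> x \in b2 :\: b1 ->
  exists2 y, y \in b1 :\: b2 & x |: (b1 :\ y) \in BB.
Proof.
move=> b1B b2B /setDP[xb2 xb1]; have mF := indeps_matroid hM.
have J_indep : x |: (b1 :&: b2) \in indeps BB.
  by apply/indepsP; exists b2; rewrite // subUset sub1set xb2 subsetIr.
have b1B' : b1 \in bases (indeps BB) by rewrite (bases_indeps hM).
have [b' b'B [sJb' sb']] := base_between mF b1B' J_indep.
rewrite (bases_indeps hM) in b'B.
have xb' : x \in b' by rewrite (subsetP sJb') ?setU11.
have b1b' : b1 :&: b' = b' :\ x.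
  apply/eqP; rewrite eqEsubset subsetI subsetDl andbT; apply/andP; split.
    apply/subsetP => z; rewrite !inE => /andP[zb1 ->]; rewrite andbT.
    by apply: contraTneq zb1 => ->.
  apply/subsetP => z; rewrite !inE => /andP[zx /(subsetP sb')].
  by rewrite !inE (negbTE zx) => /orP[/andP[]|].
have [y b1Db'] : exists y, b1 :\: b' = [set y].
  apply/cards1P; have := cardsID b' b1; have := cardsD1 x b'.
  by rewrite xb' -b1b' (bases_card hM b'B b1B); lia.
have /setDP[yb1 yb'] : y \in b1 :\: b' by rewrite b1Db' set11.
have yb2 : y \notin b2.
  by apply: contraNN yb' => yb2; rewrite (subsetP sJb') // !inE yb1 yb2 orbT.
exists y; first by rewrite inE yb1 yb2.
suff <- : b' = x |: (b1 :\ y) by [].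
apply/eqP; rewrite eq_sym eqEcard subUset sub1set xb' /=; apply/andP; split.
  apply/subsetP => z; rewrite !inE => /andP[zy zb1]; apply: contraNT zy => zb'.
  by rewrite -in_set1 -b1Db' inE zb1 zb'.
rewrite (bases_card hM b'B b1B) cardsU1 (cardsD1 y b1) yb1 !inE negb_and xb1 orbT.
by rewrite add1n.
Qed.

Lemma dual_is_matroid : is_matroid E (dual E BB).
Proof.
case: (hM) => /set0Pn[b0 b0B] sBE _; split.
- by apply/set0Pn; exists (E :\: b0); apply: imset_f.
- by move=> _ /imsetP[b _ ->]; apply: subsetDl.
move=> _ _ /imsetP[b1 b1B ->] /imsetP[b2 b2B ->] x.
rewrite !inE negb_and negbK => /andP[/orP[xb2|xE'] /andP[xb1 xE]]; last by rewrite xE in xE'.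
have [y /setDP[yb1 yb2] b'B] := exchange_toward b1B b2B (introT setDP (conj xb2 xb1)).
have yE : y \in E := subsetP (sBE b1 b1B) y yb1.
exists y; first by rewrite !inE yb1 yb2 yE.
suff -> : E :\: b1 :\ x :|: [set y] = E :\: (x |: (b1 :\ y)) by apply: imset_f.
apply/setP => z; rewrite !inE; case: (z =P y) => [->|_] /=.
  by rewrite orbT yE andbT orbF; apply/esym; apply: contraNneq xb1 => <-.
by rewrite orbF negb_or andbA.
Qed.

Lemma indeps_dualP X :
  reflect (exists2 b, b \in BB & X \subset E :\: b) (X \in indeps (dual E BB)).
Proof.
apply: (iffP indepsP) => [[_ /imsetP[b bB ->] sXb] | [b bB sXb]]; first by exists b.
by exists (E :\: b); rewrite ?imset_f.
Qed.

Lemma rank_dual Z :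
  rank (indeps (dual E BB)) Z + rank (indeps BB) E = #|Z :&: E| + rank (indeps BB) (E :\: Z).
Proof.
have mF := indeps_matroid hM; have mFd := indeps_matroid dual_is_matroid.
have [_ sBE _] := hM.
have card_split b : b \in BB ->
    #|b| + #|(Z :&: E) :\: b| = #|b :\: Z| + #|Z :&: E| /\ b \in indeps BB.
  move=> bB; split; last by apply/indepsP; exists b.
  have := cardsID b (Z :&: E); have := cardsID Z b.
  by rewrite setIC -setIA (setIidPr (sBE b bB)); lia.
apply/eqP; rewrite eqn_leq; apply/andP; split.
  have [Y /andP[/indeps_dualP[b bB sYb] sYZ] <-] := rank_attained mFd Z.
  have [card_b Fb] := card_split b bB.
  have sY : Y \subset (Z :&: E) :\: b.
    by rewrite setDE -setIA -setDE subsetI sYZ sYb.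
  have bDZ : #|b :\: Z| <= rank (indeps BB) (E :\: Z).
    by rewrite rank_indep_le ?setSD ?(sBE b bB) // (matroidS mF Fb (subsetDl b Z)).
  by have := subset_leq_card sY; rewrite -(card_base_rank hM bB); lia.
have [I /andP[FI sI] <-] := rank_attained mF (E :\: Z).
have [b bB sIb] := indep_base mF FI; rewrite (bases_indeps hM) in bB.
have [card_b _] := card_split b bB.
have dual_indep : (Z :&: E) :\: b \in indeps (dual E BB).
  by apply/indeps_dualP; exists b; rewrite // setSD ?subsetIr.
have := rank_indep_le dual_indep (subset_trans (subsetDl _ _) (subsetIl Z E)).
have sIbZ : I \subset b :\: Z by rewrite setDE subsetI sIb (subset_trans sI) // setDE subsetIr.
by have := subset_leq_card sIbZ; rewrite -(card_base_rank hM bB); lia.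
Qed.

End Duality.

(** * Restriction and contraction *)

Section RestrictionContraction.
Variables (T : finType) (F : {set {set T}}).
Hypothesis mF : matroid F.
Implicit Types (A J P S X Y : {set T}).

Definition irestr A := [set X : {set T} | (X \in F) && (X \subset A)].

Definition icontr A :=
  [set X : {set T} | (X \subset A) && (rank F (X :|: ~: A) == #|X| + rank F (~: A))].

Lemma irestr_matroid A : matroid (irestr A).
Proof.
split.
- by rewrite inE matroid0 // sub0set.
- move=> X Y; rewrite !inE => /andP[FY sYA] sXY.
  by rewrite (matroidS mF FY sXY) (subset_trans sXY sYA).
move=> X Y; rewrite !inE => /andP[FX sXA] /andP[FY sYA] ltXY.
have [y /setDP[yY yX] Fy] := matroid_aug mF FX FY ltXY.
by exists y; rewrite ?inE ?yY ?yX // Fy subUset sub1set sXA (subsetP sYA).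
Qed.

Lemma rank_irestr A X : rank (irestr A) X = rank F (X :&: A).
Proof.
apply/eqP; rewrite eqn_leq; apply/andP; split.
  apply/bigmax_leqP => W; rewrite inE => /andP[/andP[FW sWA] sWX].
  by apply: rank_indep_le => //; rewrite subsetI sWX sWA.
apply/bigmax_leqP => W; rewrite subsetI => /andP[FW /andP[sWX sWA]].
by apply: rank_indep_le sWX; rewrite inE FW.
Qed.

Lemma restr_bases A : restr (bases F) A = bases (irestr A).
Proof.
apply/setP => X; rewrite !inE; apply: maxset_eq => Y.
by rewrite /= indep_basesE // inE.
Qed.

Lemma icontr_sub A X : X \in icontr A -> X \subset A.
Proof. by rewrite inE => /andP[]. Qed.

Lemma in_icontr A J X : J \in F -> J \subset ~: A -> #|J| = rank F (~: A) ->
  X \subset A -> (X \in icontr A) = (X :|: J \in F).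
Proof.
move=> FJ sJ cardJ sXA; rewrite inE sXA /=.
have cardXJ := cardsU_disjoint (disjoint_subset_setC sXA sJ).
apply/eqP/idP => [rankXA|FXJ].
  have [K [FK sJK sK] cardK] := indep_extend_rank mF FJ (subset_trans sJ (subsetUr X (~: A))).
  have KA : #|K :&: ~: A| <= #|J|.
    by rewrite cardJ rank_indep_le ?subsetIr // (matroidS mF FK (subsetIl K (~: A))).
  have sXK : X \subset K.
    suff <- : K :&: X = X by apply: subsetIl.
    by apply/eqP; rewrite eqEcard subsetIr /=; have := card_leq_split sK; lia.
  by apply: (matroidS mF FK); rewrite subUset sXK sJK.
apply/eqP; rewrite eqn_leq; apply/andP; split.
  have := rankU_leq mF (~: A) X; rewrite setUC.
  by have := subset_leq_card (subsetDl X (~: A)); lia.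
by rewrite -cardJ -cardXJ rank_indep_le ?setUS.
Qed.

Lemma icontr_matroid A : matroid (icontr A).
Proof.
have [J /andP[FJ sJ] cardJ] := rank_attained mF (~: A).
have inC := in_icontr FJ sJ cardJ.
split.
- by rewrite inC ?sub0set // set0U.
- move=> X Y CY sXY; have sYA := icontr_sub CY; have sXA := subset_trans sXY sYA.
  by rewrite inC // in CY *; rewrite inC //; apply: (matroidS mF CY); apply: setSU.
move=> X Y CX CY ltXY; have sXA := icontr_sub CX; have sYA := icontr_sub CY.
rewrite inC // in CX; rewrite inC // in CY.
have cardU (W : {set T}) : W \subset A -> #|W :|: J| = #|W| + #|J|.
  by move=> sWA; rewrite cardsU_disjoint // (disjoint_subset_setC sWA sJ).
have [|y] := matroid_aug mF CX CY; first by rewrite !cardU // ltn_add2r.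
rewrite !inE => /andP[/norP[yX yJ] /orP[yY|]]; last by rewrite (negbTE yJ).
exists y; first by rewrite inE yY yX.
by rewrite inC -?setUA // subUset sub1set (subsetP sYA).
Qed.

Lemma rank_icontr A X : rank (icontr A) X + rank F (~: A) = rank F (X :|: ~: A).
Proof.
rewrite (rank_setIr _ (@icontr_sub A)).
have -> : X :|: ~: A = (X :&: A) :|: ~: A by rewrite setUIl setUCr setIT.
move: (X :&: A) (subsetIr X A) => {}X sXA.
have [J /andP[FJ sJ] cardJ] := rank_attained mF (~: A).
have inC := in_icontr FJ sJ cardJ.
apply/eqP; rewrite eqn_leq; apply/andP; split.
  have [W /andP[CW sWX] <-] := rank_attained (icontr_matroid A) X.
  by move: CW; rewrite inE => /andP[_ /eqP <-]; apply/rankS/setSU.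
have [K [FK sJK sK] cardK] := indep_extend_rank mF FJ (subset_trans sJ (subsetUr X (~: A))).
have KA : #|K :&: ~: A| <= rank F (~: A).
  by rewrite rank_indep_le ?subsetIr // (matroidS mF FK (subsetIl K (~: A))).
have KX : #|K :&: X| <= rank (icontr A) X.
  rewrite rank_indep_le ?subsetIr // inC; last exact: subset_trans (subsetIr K X) sXA.
  by apply: (matroidS mF FK); rewrite subUset subsetIl sJK.
by have := card_leq_split sK; lia.
Qed.

Lemma rank_icontr_disjoint S P X :
  (forall Y, Y \in F -> Y \subset S :|: P) -> [disjoint S & P] -> X \subset S ->
  rank (icontr S) X + rank F P = rank F (X :|: P).
Proof.
move=> sH dSP sXS; have := rank_icontr S X.
rewrite (rank_setIr (~: S) sH) (rank_setIr (X :|: ~: S) sH) setIUC_disjoint //.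
by have := setIUC_disjoint dSP (sub0set S); rewrite !set0U => ->.
Qed.

Lemma contr_bases A : contr (bases F) A = bases (icontr A).
Proof.
have mC := icontr_matroid A.
have rankC : rank (icontr A) setT + rank F (~: A) = rank F setT by rewrite rank_icontr setTU.
have FbC (b : {set T}) : b \in bases F -> b :&: ~: A \in F.
  by rewrite in_bases // => /andP[Fb _]; apply: (matroidS mF Fb (subsetIl b _)).
have base_setIA (b : {set T}) : b \in bases F -> rank F setT <= #|b :&: A| + rank F (~: A).
  move=> bB; have := bB; rewrite in_bases // => /andP[Fb /eqP <-].
  apply: leq_trans (card_leq_split (_ : b \subset A :|: ~: A)) _; first by rewrite setUCr subsetT.
  by rewrite leq_add2l rank_indep_le ?subsetIr ?FbC.
have base_split (K X : {set T}) : X \subset A -> K \subset ~: A -> #|X :|: K| = #|X| + #|K|.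
  by move=> sXA sK; rewrite cardsU_disjoint // (disjoint_subset_setC sXA sK).
apply/setP => X; rewrite inE in_bases //; apply/minsetP/andP.
  move=> [/exists_inP[b bB /eqP eX] minX].
  have [K [FK sbK sK] cardK] := indep_extend_rank mF (FbC b bB) (subsetIr b (~: A)).
  have [b' b'B [sKb' sb']] := base_between mF bB FK.
  have sb'X : b' :&: A \subset X.
    rewrite eX; apply/subsetP => z /setIP[/(subsetP sb') + zA].
    rewrite !inE zA andbT; case/orP=> // /(subsetP sK).
    by rewrite inE zA.
  have eX' : b' :&: A = X by apply: minX sb'X; apply/exists_inP; exists b'.
  have eK : b' :&: ~: A = K.
    apply/eqP; rewrite eq_sym eqEcard subsetI sKb' sK cardK /=.
    by rewrite rank_indep_le ?subsetIr ?FbC.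
  have eb' : X :|: K = b' by rewrite -eX' -eK -setIUr setUCr setIT.
  have sXA : X \subset A by rewrite -eX' subsetIr.
  move: b'B; rewrite in_bases // -eb' => /andP[FXK /eqP].
  rewrite (in_icontr FK sK cardK sXA) FXK base_split // cardK -rankC => cardXK.
  by rewrite -(eqn_add2r (rank F (~: A))) cardXK.
move=> [CX /eqP cardX]; have sXA := icontr_sub CX.
have [J /andP[FJ sJ] cardJ] := rank_attained mF (~: A).
have FXJ : X :|: J \in F by rewrite -(in_icontr FJ sJ cardJ sXA).
have XJB : X :|: J \in bases F.
  by rewrite in_bases // FXJ base_split // cardX cardJ rankC /=.
have eX : (X :|: J) :&: A = X.
  rewrite setIUl (setIidPl sXA); apply/setUidPl/subsetP => z /setIP[/(subsetP sJ)].
  by rewrite inE => /negP.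
split; first by apply/exists_inP; exists (X :|: J); rewrite // eX.
move=> Y /exists_inP[b bB /eqP eY] sYX; apply/eqP; rewrite eqEcard sYX /= eY.
by have := base_setIA b bB; rewrite -eY; lia.
Qed.

End RestrictionContraction.

(** * Matroid union *)

Section MatroidUnion.
Variable T : finType.
Implicit Types (E I J P Q W X Y Z : {set T}) (F G : {set {set T}}).

Definition iunion F G :=
  [set X : {set T} | [exists Y in F, exists Z in G, X \subset Y :|: Z]].

Definition splits F G X (p : {set T} * {set T}) :=
  [&& p.1 \in F, p.2 \in G, [disjoint p.1 & p.2] & p.1 :|: p.2 == X].

Lemma iunionP F G X :
  reflect (exists Y Z, [/\ Y \in F, Z \in G & X \subset Y :|: Z]) (X \in iunion F G).
Proof.
rewrite inE; apply: (iffP exists_inP) => [[Y FY /exists_inP[Z GZ sX]]|[Y [Z [FY GZ sX]]]].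
  by exists Y, Z.
by exists Y => //; apply/exists_inP; exists Z.
Qed.

Lemma iunionC F G : iunion F G = iunion G F.
Proof.
by apply/setP => X; apply/iunionP/iunionP => -[Y [Z [FY GZ sX]]]; exists Z, Y; rewrite setUC.
Qed.

Lemma splitsC F G X P1 P2 : splits F G X (P1, P2) = splits G F X (P2, P1).
Proof. by rewrite /splits /= disjoint_sym setUC andbCA andbA. Qed.

Lemma iunion_split F G X : matroid F -> matroid G -> X \in iunion F G ->
  exists p, splits F G X p.
Proof.
move=> mF mG /iunionP[Y [Z [FY GZ sX]]].
exists (X :&: Y, (X :&: Z) :\: Y); rewrite /splits /=.
rewrite (matroidS mF FY (subsetIr X Y)).
rewrite (matroidS mG GZ (subset_trans (subsetDl _ _) (subsetIr X Z))) /=.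
rewrite -setI_eq0; apply/andP; split; apply/eqP/setP => z; rewrite !inE; first by case_mem.
case zX: (z \in X); last by rewrite !andbF.
by move: (subsetP sX z zX); rewrite inE /=; case_mem.
Qed.

(* If (P1, P2) overlaps a split (Q1, Q2) of Y maximally, the element that augments P1
   towards Q1 cannot lie in X: moving it from P2 to P1 would increase the overlap. *)
Lemma splits_aug F G X Y P1 P2 Q1 Q2 : matroid F -> matroid G ->
  splits F G X (P1, P2) -> splits F G Y (Q1, Q2) ->
  (forall p, splits F G X p -> #|p.1 :&: Q1| + #|p.2 :&: Q2| <= #|P1 :&: Q1| + #|P2 :&: Q2|) ->
  #|P1| < #|Q1| -> exists2 y, y \in Y :\: X & y |: X \in iunion F G.
Proof.
move=> mF mG /and4P[/= FP1 GP2 dP /eqP eX] /and4P[/= FQ1 _ dQ /eqP eY] maxP ltPQ.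
have [j /setDP[jQ1 jP1] FjP1] := matroid_aug mF FP1 FQ1 ltPQ.
case jX: (j \in X); last first.
  exists j; first by rewrite inE jX -eY inE jQ1.
  by apply/iunionP; exists (j |: P1), P2; rewrite -eX setUA.
have jP2 : j \in P2 by move: jX; rewrite -eX inE (negbTE jP1).
have jQ2 : j \notin Q2 by rewrite (disjointFr dQ jQ1).
have : splits F G X (j |: P1, P2 :\ j).
  rewrite /splits /= FjP1 (matroidS mG GP2 (subsetDl P2 [set j])) /=.
  rewrite -setI_eq0 -eX; apply/andP; split; apply/eqP/setP => z; rewrite !inE.
    case: (z =P j) => [->|_] //=; apply/negbTE/negP => /andP[zP1 zP2].
    by rewrite (disjointFr dP zP1) in zP2.
  by case: (z =P j) => [->|_]; rewrite ?jP2 ?orbT //= andbT.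
move=> /maxP /=; have -> : (j |: P1) :&: Q1 = j |: (P1 :&: Q1).
  by apply/setP => z; rewrite !inE; case: (z =P j) => [->|_] //=; rewrite jQ1.
have -> : (P2 :\ j) :&: Q2 = P2 :&: Q2.
  by apply/setP => z; rewrite !inE; case: (z =P j) => [->|_] //=; rewrite (negbTE jQ2) andbF.
by rewrite cardsU1 inE (negbTE jP1); lia.
Qed.

Lemma iunion_matroid F G : matroid F -> matroid G -> matroid (iunion F G).
Proof.
move=> mF mG; split.
- by apply/iunionP; exists set0, set0; rewrite !matroid0 // sub0set.
- move=> X Y /iunionP[Y1 [Y2 [FY1 GY2 sY]]] sXY.
  by apply/iunionP; exists Y1, Y2; rewrite FY1 GY2 (subset_trans sXY sY).
move=> X Y UX UY ltXY.
have [[Q1 Q2] sQ] := iunion_split mF mG UY.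
have [p0 sp0] := iunion_split mF mG UX.
case: (arg_maxnP (fun p => #|p.1 :&: Q1| + #|p.2 :&: Q2|) sp0) => [[P1 P2] sP maxP].
have /and4P[_ _ /cardsU_disjoint /= cardX /eqP /= eX] := sP.
have /and4P[_ _ /cardsU_disjoint /= cardY /eqP /= eY] := sQ.
have [lt1 | le1] := ltnP #|P1| #|Q1|; first exact: splits_aug sP sQ maxP lt1.
rewrite iunionC; apply: (splits_aug mG mF (P1 := P2) (Q1 := Q2) (P2 := P1) (Q2 := Q1)).
- by rewrite -splitsC.
- by rewrite -splitsC.
- by case=> p1 p2; rewrite -splitsC /= => /maxP /=; rewrite addnC [X in _ <= X]addnC.
- by rewrite eX eY in cardX cardY; lia.
Qed.

Lemma iunion_sub F G E1 E2 X :
  (forall Y, Y \in F -> Y \subset E1) -> (forall Y, Y \in G -> Y \subset E2) ->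
  X \in iunion F G -> X \subset E1 :|: E2.
Proof.
move=> sF sG /iunionP[Y [Z [FY GZ sX]]].
by apply: subset_trans sX _; apply: setUSS (sF _ FY) (sG _ GZ).
Qed.

Lemma munion_bases F G : matroid F -> matroid G ->
  munion (bases F) (bases G) = bases (iunion F G).
Proof.
move=> mF mG; apply/setP => X; rewrite !inE; apply: maxset_cofinal => Y.
  case/exists_inP=> b1 + /exists_inP[b2 + /eqP ->].
  rewrite !in_bases // => /andP[Fb1 _] /andP[Gb2 _].
  by apply/iunionP; exists b1, b2.
case/iunionP=> [Y1 [Y2 [FY1 GY2 sY]]].
have [b1 b1B sY1] := indep_base mF FY1; have [b2 b2B sY2] := indep_base mG GY2.
exists (b1 :|: b2); last exact: subset_trans sY (setUSS sY1 sY2).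
by apply/exists_inP; exists b1 => //; apply/exists_inP; exists b2.
Qed.

Lemma dsum_zeroM (B : {set {set T}}) : dsum B (zeroM T) = B.
Proof.
apply/setP => X; apply/imset2P/idP => [[b1 b2 Bb1 + ->]|BX].
  by rewrite inE => /eqP ->; rewrite setU0.
by exists X set0; rewrite ?inE ?setU0.
Qed.

Lemma rank_iunion_leq F G X Z : matroid F -> matroid G -> Z \subset X ->
  rank (iunion F G) X <= rank F Z + rank G Z + #|X :\: Z|.
Proof.
move=> mF mG sZX; apply/bigmax_leqP => W /andP[/iunionP[Y1 [Y2 [FY1 GY2 sW]]] sWX].
have WZ : #|W :&: Z| <= rank F Z + rank G Z.
  apply: leq_trans (card_leq_split (subset_trans (subsetIl W Z) sW)) _.
  by apply: leq_add; apply: rank_indep_le; rewrite ?(matroidS mF FY1) ?(matroidS mG GY2)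
    ?subsetIr // -setIA subIset // subsetIl orbT.
have WDZ : #|W :&: ~: Z| <= #|X :\: Z| by apply/subset_leq_card; rewrite setDE setSI.
by have := card_leq_split (_ : W \subset Z :|: ~: Z); rewrite setUCr subsetT; lia.
Qed.

End MatroidUnion.

Section UnionRank.
Variable T : finType.
Implicit Types (I W X Y Z : {set T}) (F G : {set {set T}}) (e : T).

Definition packing F G X k := exists I1 I2,
  [/\ I1 \in F, I2 \in G, I1 :|: I2 \subset X, [disjoint I1 & I2] & k <= #|I1| + #|I2|].

Lemma packingC F G X k : packing G F X k -> packing F G X k.
Proof.
by case=> I1 [I2 [GI1 FI2 sX dI cardI]]; exists I2, I1; rewrite setUC disjoint_sym addnC.
Qed.

Lemma packingS F G X Y k : X \subset Y -> packing F G X k -> packing F G Y k.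
Proof.
by move=> sXY [I1 [I2 [FI1 GI2 sX dI cardI]]]; exists I1, I2; split=> //; apply: subset_trans sXY.
Qed.

Lemma rank_icontr_set1 F e W : matroid F ->
  rank (icontr F (~: [set e])) W + rank F [set e] = rank F (e |: W).
Proof. by move=> mF; have := rank_icontr mF (~: [set e]) W; rewrite setCK setUC. Qed.

Lemma rank_setU1_loop F e W : matroid F -> rank F [set e] = 0 -> rank F (e |: W) = rank F W.
Proof.
move=> mF loop; apply/eqP; rewrite eqn_leq (rankS F (subsetUr [set e] W)) andbT.
by have := rank_submod mF [set e] W; rewrite loop; lia.
Qed.

Lemma packing_lift F G X k e : matroid F -> [set e] \in F -> e \in X ->
  packing (icontr F (~: [set e])) G (X :\ e) k.-1 -> packing F G X k.
Proof.
move=> mF Fe eX [I1 [I2 [CI1 GI2 sX dI cardI]]].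
have sI1 : I1 \subset ~: [set e] := icontr_sub CI1.
have eI1 : e \notin I1 by apply/negP => /(subsetP sI1); rewrite !inE eqxx.
have eI2 : e \notin I2.
  by apply/negP => eI2; have := subsetP sX e; rewrite !inE eI2 orbT eqxx => /(_ isT).
have rank_e : #|[set e]| = rank F (~: ~: [set e]).
  by rewrite setCK; apply/esym/eqP; rewrite -indep_rank.
exists (e |: I1), I2; split.
- by rewrite setUC -(in_icontr mF Fe _ rank_e sI1) // setCK.
- by [].
- by rewrite -setUA subUset sub1set eX (subset_trans sX (subsetDl _ _)).
- by rewrite disjoints_subset subUset sub1set inE eI2 -disjoints_subset.
- by rewrite cardsU1 eI1; lia.
Qed.

Section Uncrossing.
Variables (F G : {set {set T}}) (X : {set T}) (k : nat) (e : T).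
Hypotheses (mF : matroid F) (mG : matroid G) (eX : e \in X).
Hypothesis bound : forall Z, Z \subset X -> k <= rank F Z + rank G Z + #|X :\: Z|.

Lemma cardsD_setU1 W : #|X :\: (e |: W)| = #|(X :\ e) :\: W|.
Proof. by rewrite setDDl. Qed.

Lemma bound_setU1_loop W : rank G [set e] = 0 -> W \subset X :\ e ->
  k <= rank F (e |: W) + rank G W + #|(X :\ e) :\: W|.
Proof.
move=> loop sW; rewrite -(rank_setU1_loop W mG loop) -cardsD_setU1.
by apply: bound; rewrite subUset sub1set eX (subset_trans sW (subsetDl _ _)).
Qed.

Lemma bound_uncrossing W W' : W \subset X :\ e -> W' \subset X :\ e ->
  rank F (e |: W) + rank G W + #|(X :\ e) :\: W| < k ->
  rank F W' + rank G (e |: W') + #|(X :\ e) :\: W'| < k -> False.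
Proof.
move=> sW sW' badW badW'.
have eW : e \notin W by apply/negP => /(subsetP sW); rewrite !inE eqxx.
have eW' : e \notin W' by apply/negP => /(subsetP sW'); rewrite !inE eqxx.
set V := e |: (W :|: W'); set U := W :&: W'.
have sX' : X :\ e \subset X := subsetDl _ _.
have boundV : k <= rank F V + rank G V + #|X :\: V|.
  by apply: bound; rewrite subUset sub1set eX subUset (subset_trans sW sX') (subset_trans sW' sX').
have boundU : k <= rank F U + rank G U + #|X :\: U|.
  by apply: bound; apply: subset_trans (subsetIl _ _) (subset_trans sW sX').
have submodF := rank_submod mF (e |: W) W'.
have submodG := rank_submod mG W (e |: W').
have capU : (e |: W) :&: W' = U.
  by apply/setP => z; rewrite !inE; case: (z =P e) => [->|] //=; rewrite (negbTE eW') andbF.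
have capU' : W :&: (e |: W') = U.
  by apply/setP => z; rewrite !inE; case: (z =P e) => [->|] //=; rewrite (negbTE eW).
rewrite capU -setUA -/V in submodF; rewrite capU' setUCA -/V in submodG.
have cardsDUI := cardsUI ((X :\ e) :\: W) ((X :\ e) :\: W').
rewrite -setDIr -setDUr -/U in cardsDUI.
have cardsDV : #|X :\: V| = #|(X :\ e) :\: (W :|: W')| by rewrite cardsD_setU1.
have cardsDU : #|X :\: U| = (#|(X :\ e) :\: U|).+1.
  have eU : e \notin U by rewrite inE (negbTE eW).
  by rewrite (cardsD1 e (X :\: U)) in_setD eU eX /= setDDl setUC -setDDl.
lia.
Qed.

End Uncrossing.

(* Edmonds' argument by induction on |X|: for e in X, either the bound survives
   contracting e in F (or in G), or e is a loop and can be dropped, or two violating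
   sets contradict the bound by uncrossing. *)
Lemma packing_of_rank_bound F G X k : matroid F -> matroid G ->
  (forall Z, Z \subset X -> k <= rank F Z + rank G Z + #|X :\: Z|) -> packing F G X k.
Proof.
have [n] := ubnP #|X|; elim: n F G X k => // n IH F G X k ltX mF mG bound.
have [X0 | [e eX]] := set_0Vmem X.
  exists set0, set0; split; rewrite ?matroid0 ?setU0 ?sub0set // -?setI_eq0 ?setI0 //.
  by have := bound set0 (sub0set _); rewrite !rank0 // setD0 X0 !cards0.
have ltX' : #|X :\ e| < n by move: ltX; rewrite (cardsD1 e X) eX.
have contract_case F' G' : matroid F' -> matroid G' -> rank F' [set e] = 1 ->
    (forall W, W \subset X :\ e -> k <= rank F' (e |: W) + rank G' W + #|(X :\ e) :\: W|) ->
    packing F' G' X k.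
  move=> mF' mG' rank_e boundF'; have Fe : [set e] \in F' by rewrite indep_rank // rank_e cards1.
  apply: (packing_lift mF' Fe eX (IH _ _ _ _ ltX' (icontr_matroid mF' _) mG' _)) => W sW.
  by have := boundF' W sW; rewrite -(rank_icontr_set1 e W mF') rank_e; lia.
have rank_e1 H : rank H [set e] <= 1 by rewrite -(cards1 e) rank_leq_card.
case: (boolP [exists W : {set T}, (W \subset X :\ e) &&
    (rank F (e |: W) + rank G W + #|(X :\ e) :\: W| < k)]) => [/existsP[W /andP[sW badW]] | goodF].
  case: (boolP [exists W' : {set T}, (W' \subset X :\ e) &&
      (rank F W' + rank G (e |: W') + #|(X :\ e) :\: W'| < k)]) =>
      [/existsP[W' /andP[sW' badW']] | goodG].
    by case: (bound_uncrossing mF mG eX bound sW sW' badW badW').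
  have [loop | rank_e] : rank G [set e] = 0 \/ rank G [set e] = 1 by have := rank_e1 G; lia.
    by have := bound_setU1_loop mG eX bound loop sW; rewrite leqNgt badW.
  apply/packingC/contract_case => // W' sW'.
  by move/existsPn: goodG => /(_ W'); rewrite sW' -leqNgt; lia.
have {}goodF W : W \subset X :\ e -> k <= rank F (e |: W) + rank G W + #|(X :\ e) :\: W|.
  by move/existsPn: goodF => /(_ W) + sW; rewrite sW -leqNgt.
have [loop | rank_e] : rank F [set e] = 0 \/ rank F [set e] = 1 by have := rank_e1 F; lia.
  apply: packingS (subsetDl X [set e]) (IH _ _ _ _ ltX' mF mG _) => W sW.
  by rewrite -(rank_setU1_loop W mF loop) goodF.
exact: contract_case.
Qed.

Lemma rank_iunion_geq F G X : matroid F -> matroid G ->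
  exists2 Z : {set T}, Z \subset X & rank F Z + rank G Z + #|X :\: Z| <= rank (iunion F G) X.
Proof.
move=> mF mG.
case: (boolP [exists Z : {set T}, (Z \subset X) &&
  (rank F Z + rank G Z + #|X :\: Z| <= rank (iunion F G) X)]) =>
  [/existsP[Z /andP[]] | /existsPn small].
  by exists Z.
have [|I1 [I2 [FI1 GI2 sX dI]]] := @packing_of_rank_bound F G X (rank (iunion F G) X).+1 mF mG.
  by move=> Z sZ; have := small Z; rewrite sZ ltnNge.
have UI : I1 :|: I2 \in iunion F G by apply/iunionP; exists I1, I2.
by have := rank_indep_le UI sX; rewrite cardsU_disjoint // ltnNge => ->.
Qed.

Lemma rank_iunion_full F G X : matroid F -> matroid G ->
  (forall Z, Z \subset X -> #|Z| <= rank F Z + rank G Z) -> rank (iunion F G) X = #|X|.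
Proof.
move=> mF mG le_card; apply/eqP; rewrite eqn_leq rank_leq_card.
have [Z sZX] := rank_iunion_geq X mF mG; apply: leq_trans.
by have := le_card Z sZX; have := subset_leq_card sZX; rewrite cardsDS //; lia.
Qed.

End UnionRank.

(** * Quotients *)

Section Quotients.
Variable T : finType.
Implicit Types (A E X Y : {set T}) (F G : {set {set T}}).

Definition rank_ge F1 F2 :=
  forall X Y, X \subset Y -> rank F2 Y + rank F1 X <= rank F1 Y + rank F2 X.

Lemma mge_of_rank_ge E F1 F2 : matroid F1 -> matroid F2 -> rank_ge F1 F2 ->
  mge E (bases F1) (bases F2).
Proof.
move=> m1 m2 ge12 A _; split=> [b1 | b2].
  rewrite in_restr_bases // => /and3P[F1b1 sb1A /eqP card_b1].
  have [b2 /andP[F2b2 sb2b1] card_b2] := rank_attained m2 b1.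
  exists b2 => //; rewrite in_restr_bases // F2b2 (subset_trans sb2b1 sb1A) /=.
  have := ge12 _ _ sb1A; have := rankS F2 sb1A; move: F1b1; rewrite (indep_rank m1).
  by move=> /eqP; lia.
rewrite in_restr_bases // => /and3P[F2b2 sb2A /eqP card_b2].
have := ge12 _ _ (sub0set b2); rewrite !rank0 // => le_b2.
have F1b2 : b2 \in F1.
  have := indep_rank m2 b2; rewrite F2b2 => /esym/eqP rank_b2.
  by rewrite (indep_rank m1) eqn_leq rank_leq_card; lia.
have [Y [F1Y sb2Y sYA] card_Y] := indep_extend_rank m1 F1b2 sb2A.
by exists Y => //; rewrite in_restr_bases // F1Y sYA card_Y eqxx.
Qed.

Lemma rank_ge_of_mge E F1 F2 : matroid F1 -> matroid F2 ->
  (forall X, X \in F1 -> X \subset E) -> (forall X, X \in F2 -> X \subset E) ->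
  mge E (bases F1) (bases F2) -> rank_ge F1 F2.
Proof.
move=> m1 m2 sF1 sF2 ge12 X Y sXY.
rewrite (rank_setIr Y sF1) (rank_setIr Y sF2) (rank_setIr X sF1) (rank_setIr X sF2).
move: (setSI E sXY) (subsetIr Y E); move: (X :&: E) (Y :&: E) => {sXY}X {}Y sXY sYE.
have [I /andP[F1I sIX] card_I] := rank_attained m1 X.
have [K [F1K sIK sKY] card_K] := indep_extend_rank m1 F1I (subset_trans sIX sXY).
have KB : K \in restr (bases F1) Y by rewrite in_restr_bases // F1K sKY card_K eqxx.
have [b2 + sb2K] := (ge12 Y sYE).1 K KB.
rewrite in_restr_bases // => /and3P[F2b2 _ /eqP card_b2].
have := rank_indep_le F2b2 sb2K; have := rankU_leq m2 I K; rewrite (setUidPr sIK) cardsDS //.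
by have := rankS F2 sIX; have := subset_leq_card sIK; lia.
Qed.

Lemma rank_ge_icontr F1 F2 A : matroid F1 -> matroid F2 -> rank_ge F1 F2 ->
  rank_ge (icontr F1 A) (icontr F2 A).
Proof.
move=> m1 m2 ge12 X Y sXY; have := ge12 _ _ (setSU (~: A) sXY).
by have := rank_icontr m1 A X; have := rank_icontr m2 A X; have := rank_icontr m1 A Y;
  have := rank_icontr m2 A Y; lia.
Qed.

(* With ZX minimising the union rank formula of F2, G2 at X and ZY that of F1, G1 at Y,
   test the former at Y with ZX :|: ZY and the latter at X with ZX :&: ZY;
   submodularity closes the gap. *)
Lemma rank_ge_iunion F1 F2 G1 G2 : matroid F1 -> matroid F2 -> matroid G1 -> matroid G2 ->
  rank_ge F1 F2 -> rank_ge G1 G2 -> rank_ge (iunion F1 G1) (iunion F2 G2).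
Proof.
move=> mF1 mF2 mG1 mG2 geF geG X Y sXY.
have [ZY sZY minY] := rank_iunion_geq Y mF1 mG1.
have [ZX sZX minX] := rank_iunion_geq X mF2 mG2.
have sU : ZX :|: ZY \subset Y by rewrite subUset sZY (subset_trans sZX sXY).
have sI : ZX :&: ZY \subset X := subset_trans (subsetIl _ _) sZX.
have := rank_iunion_leq mF2 mG2 sU; have := rank_iunion_leq mF1 mG1 sI.
have := geF _ _ (subsetUl ZX ZY); have := geG _ _ (subsetUl ZX ZY).
have := rank_submod mF1 ZX ZY; have := rank_submod mG1 ZX ZY.
rewrite !cardsDS //; have := cardsUI ZX ZY.
have := subset_leq_card sU; have := subset_leq_card sI.
by have := subset_leq_card sZX; have := subset_leq_card sZY; rewrite !cardsDS // in minX minY; lia.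
Qed.

End Quotients.

(** * Linking through a common part *)

Section Links.
Variables (T : finType) (F G : {set {set T}}).
Hypotheses (mF : matroid F) (mG : matroid G).
Implicit Types (A P S X Y Z : {set T}).

Definition ilink A := icontr (iunion F G) A.

Lemma ilink_matroid A : matroid (ilink A).
Proof. exact/icontr_matroid/iunion_matroid. Qed.

Lemma rank_ilink A X : rank (ilink A) X + rank (iunion F G) (~: A) = rank (iunion F G) (X :|: ~: A).
Proof. exact/rank_icontr/iunion_matroid. Qed.

Lemma rank_ge_irestr_ilink S P : [disjoint S & P] -> (forall Y, Y \in G -> Y \subset P) ->
  rank_ge (irestr F S) (ilink S).
Proof.
move=> dSP sG X Y sXY; rewrite !rank_irestr.
have := rank_ilink S X; have := rank_ilink S Y.
have [Z sZ minZ] := rank_iunion_geq (X :|: ~: S) mF mG.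
have sZ' : Z :|: (Y :&: S) \subset Y :|: ~: S.
  by rewrite subUset (subset_trans sZ (setSU _ sXY)) (subset_trans (subsetIl _ _) (subsetUl _ _)).
have := rank_iunion_leq mF mG sZ'.
have -> : rank G (Z :|: (Y :&: S)) = rank G Z.
  rewrite (rank_setIr _ sG) [RHS](rank_setIr _ sG) setIUl.
  suff -> : Y :&: S :&: P = set0 by rewrite setU0.
  by apply/disjoint_setI0; apply: disjointWl dSP; apply: subsetIr.
have := rank_submod mF (Z :|: (X :&: S)) (Y :&: S).
rewrite -setUA (setUidPr (setSI S sXY)).
have mono : rank F (X :&: S) <= rank F ((Z :|: (X :&: S)) :&: (Y :&: S)).
  by apply: rankS; rewrite subsetI subsetUr setSI.
have := rankU_leq mF Z (X :&: S); move: minZ.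
have -> : (Y :|: ~: S) :\: (Z :|: (Y :&: S)) = ~: S :\: Z.
  by apply/setP => z; rewrite !inE; case_mem.
have -> : (X :|: ~: S) :\: Z = (~: S :\: Z) :|: ((X :&: S) :\: Z).
  by apply/setP => z; rewrite !inE; case_mem.
rewrite cardsU_disjoint; first lia.
by rewrite -setI_eq0; apply/eqP/setP => z; rewrite !inE; case_mem.
Qed.

Lemma rank_ge_ilink_icontr S : rank_ge (ilink S) (icontr F S).
Proof.
move=> X Y sXY.
have := rank_ilink S X; have := rank_ilink S Y.
have := rank_icontr mF S X; have := rank_icontr mF S Y.
set W := X :|: ~: S; have sW : W \subset Y :|: ~: S by apply: setSU.
have [Z sZ] := rank_iunion_geq (Y :|: ~: S) mF mG.
have := rank_iunion_leq mF mG (subsetIr Z W).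
have := rankS G (subsetIl Z W); have := rank_submod mF Z W.
have := rankU_leq mF (Z :|: W) (Y :|: ~: S).
have sZW : Z :|: W \subset Y :|: ~: S by rewrite subUset sZ sW.
rewrite (setUidPr sZW).
have -> : W :\: (Z :&: W) = W :\: Z by apply/setP => z; rewrite !inE; case_mem.
have -> : (Y :|: ~: S) :\: Z = ((Y :|: ~: S) :\: (Z :|: W)) :|: (W :\: Z).
  apply/setP => z; rewrite /W !inE.
  by case: (boolP (z \in X)) => [/(subsetP sXY) -> |]; case_mem.
rewrite cardsU_disjoint; first lia.
by rewrite -setI_eq0; apply/eqP/setP => z; rewrite !inE; case_mem.
Qed.

Section DualLinks.
Variables (S P : {set T}).
Hypotheses (dSP : [disjoint S & P]) (sF : forall Y, Y \in F -> Y \subset S :|: P)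
  (sG : forall Y, Y \in G -> Y \subset P).

Lemma iunion_sub_setU Y : Y \in iunion F G -> Y \subset S :|: P.
Proof. by move/(iunion_sub sF sG); rewrite -setUA setUid. Qed.

Lemma ilink_eq_of_rank H : matroid H -> (forall Y, Y \in H -> Y \subset S) ->
  (forall X, X \subset S -> rank H X + rank (iunion F G) P = rank (iunion F G) (X :|: P)) ->
  H = ilink S.
Proof.
move=> mH sH rank_H; apply: (eq_matroid_rank mH (ilink_matroid S)) => X.
rewrite (rank_setIr X sH) (rank_setIr X (@icontr_sub _ _ S)).
have := rank_icontr_disjoint (iunion_matroid mF mG) iunion_sub_setU dSP (subsetIr X S).
by rewrite -rank_H ?subsetIr // => /addIn.
Qed.

Lemma irestr_eq_ilink :
  (forall Z, Z \subset P -> rank G Z + rank F (S :|: P) = #|Z| + rank F ((S :|: P) :\: Z)) ->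
  irestr F S = ilink S.
Proof.
set E := S :|: P => rank_G.
have sPE : P \subset E := subsetUr S P.
have rank_G' Z : rank G Z + rank F E = #|Z :&: P| + rank F (E :\: (Z :&: P)).
  by rewrite (rank_setIr Z sG) rank_G ?subsetIr.
have rank_UP : rank (iunion F G) P = #|P|.
  apply: rank_iunion_full => // Z sZP; have := rank_G Z sZP; have := rank_subadd mF Z (E :\: Z).
  by rewrite -{1}(setIidPr (subset_trans sZP sPE)) setID; lia.
apply: ilink_eq_of_rank (irestr_matroid mF S) _ _ => [Y | X sXS]; first by rewrite inE => /andP[].
rewrite rank_irestr (setIidPl sXS) rank_UP.
have dXP : [disjoint X & P] := disjointWl sXS dSP.
apply/eqP; rewrite eqn_leq; apply/andP; split; last first.
  have := rank_iunion_leq mF mG (subsetUl X P).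
  rewrite (rank_setIr X sG) (disjoint_setI0 dXP) rank0 // addn0.
  by rewrite setDUl setDv set0U (setDidPl (_ : [disjoint P & X])) // disjoint_sym.
have [Z sZ minZ] := rank_iunion_geq (X :|: P) mF mG.
have sZE : Z \subset E := subset_trans sZ (setSU P sXS).
have := rank_submod mF Z (E :\: (Z :&: P)).
have -> : Z :&: (E :\: (Z :&: P)) = Z :\: P.
  apply/setP => z; rewrite !inE.
  by case: (boolP (z \in Z)) => [/(subsetP sZE) | _]; rewrite /E ?inE; case_mem.
have -> : Z :|: (E :\: (Z :&: P)) = E.
  apply/setP => z; rewrite !inE.
  by case: (boolP (z \in Z)) => [/(subsetP sZE) | _]; rewrite /E ?inE; case_mem.
have := rank_leq_addD mF X (Z :\: P).
have -> : X :\: (Z :\: P) = X :\: Z.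
  apply/setP => z; rewrite !inE.
  by case: (boolP (z \in X)) => [/(disjointFr dXP) -> | _]; case_mem.
have dXPZ : [disjoint X :\: Z & P :\: Z] := disjointW (subsetDl _ _) (subsetDl _ _) dXP.
move: minZ; rewrite setDUl cardsU_disjoint //.
have := rank_G' Z; have := cardsID Z P; rewrite setIC; lia.
Qed.

Lemma icontr_eq_ilink :
  (forall Z, Z \subset P -> rank G Z + rank F P = #|Z| + rank F (P :\: Z)) ->
  icontr F S = ilink S.
Proof.
move=> rank_G.
have rank_G' Z : rank G Z + rank F P = #|Z :&: P| + rank F (P :\: Z).
  by rewrite (rank_setIr Z sG) rank_G ?subsetIr // setDIr setDv setU0.
have rank_UP : rank (iunion F G) P = #|P|.
  apply: rank_iunion_full => // Z sZP; have := rank_G Z sZP; have := rank_subadd mF Z (P :\: Z).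
  by rewrite -{1}(setIidPr sZP) setID; lia.
apply: ilink_eq_of_rank (icontr_matroid mF S) (@icontr_sub _ _ S) _ => X sXS.
apply: (@addIn (rank F P)); rewrite addnAC rank_icontr_disjoint // rank_UP.
apply/eqP; rewrite eqn_leq; apply/andP; split; last first.
  have := rank_iunion_leq mF mG (subxx (X :|: P)); have := rank_G' (X :|: P).
  by rewrite setDv cards0 (setIidPr (subsetUr X P)) setDUr setDv setI0 rank0 //; lia.
have [Z sZ minZ] := rank_iunion_geq (X :|: P) mF mG.
have := rank_subadd mF Z (P :\: Z).
have -> : Z :|: (P :\: Z) = Z :|: P by apply/setP => z; rewrite !inE; case_mem.
have := rank_leq_addD mF (X :|: P) (Z :|: P).
have : #|(X :|: P) :\: (Z :|: P)| <= #|X :\: Z|.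
  by apply/subset_leq_card/subsetP => z; rewrite !inE; case_mem.
have dXP : [disjoint X & P] := disjointWl sXS dSP.
have dXPZ : [disjoint X :\: Z & P :\: Z] := disjointW (subsetDl _ _) (subsetDl _ _) dXP.
move: minZ; rewrite setDUl cardsU_disjoint //.
have := rank_G' Z; have := cardsID Z P; rewrite setIC; lia.
Qed.

End DualLinks.
End Links.

Lemma rank_ge_ilink (T : finType) (F1 F2 G1 G2 : {set {set T}}) (A : {set T}) :
  matroid F1 -> matroid F2 -> matroid G1 -> matroid G2 ->
  rank_ge F1 F2 -> rank_ge G1 G2 -> rank_ge (ilink F1 G1 A) (ilink F2 G2 A).
Proof.
move=> mF1 mF2 mG1 mG2 geF geG.
by apply: rank_ge_icontr; [exact: iunion_matroid | exact: iunion_matroid | exact: rank_ge_iunion].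
Qed.

Section BaseFamilyLinks.
Variable T : finType.
Implicit Types (S P Q E Z : {set T}) (B : {set {set T}}).

Lemma indeps_bases (F : {set {set T}}) : matroid F -> indeps (bases F) = F.
Proof. by move=> mF; apply/setP => X; rewrite inE indep_basesE. Qed.

Lemma linkM_bases S Q E1 E2 B1 B2 : is_matroid E1 B1 -> is_matroid E2 B2 ->
  linkM S Q B1 B2 = bases (ilink (indeps B1) (indeps B2) (S :|: Q)).
Proof.
move=> h1 h2; have m1 := indeps_matroid h1; have m2 := indeps_matroid h2.
rewrite /linkM !dsum_zeroM -{1}(bases_indeps h1) -{1}(bases_indeps h2) munion_bases //.
exact/contr_bases/iunion_matroid.
Qed.

Lemma linkP_bases S E1 E2 B1 B2 : is_matroid E1 B1 -> is_matroid E2 B2 ->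
  linkP S B1 B2 = bases (ilink (indeps B1) (indeps B2) S).
Proof.
move=> h1 h2; have m1 := indeps_matroid h1; have m2 := indeps_matroid h2.
rewrite /linkP dsum_zeroM -{1}(bases_indeps h1) -{1}(bases_indeps h2) munion_bases //.
exact/contr_bases/iunion_matroid.
Qed.

Lemma restr_indeps E B S : is_matroid E B -> restr B S = bases (irestr (indeps B) S).
Proof. by move=> hB; rewrite -{1}(bases_indeps hB) (restr_bases (indeps_matroid hB)). Qed.

Lemma contr_indeps E B S : is_matroid E B -> contr B S = bases (icontr (indeps B) S).
Proof. by move=> hB; rewrite -{1}(bases_indeps hB) (contr_bases (indeps_matroid hB)). Qed.

Lemma rank_restr_dual S P B Z : is_matroid (S :|: P) B -> Z \subset P ->
  rank (indeps (restr (dual (S :|: P) B) P)) Z + rank (indeps B) (S :|: P) =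
  #|Z| + rank (indeps B) ((S :|: P) :\: Z).
Proof.
move=> hB sZP; have hD := dual_is_matroid hB.
rewrite (restr_indeps _ hD) (indeps_bases (irestr_matroid (indeps_matroid hD) P)).
by rewrite rank_irestr (setIidPl sZP) rank_dual // (setIidPl (subset_trans sZP (subsetUr S P))).
Qed.

Lemma rank_contr_dual S P B Z : is_matroid (S :|: P) B -> [disjoint S & P] -> Z \subset P ->
  rank (indeps (contr (dual (S :|: P) B) P)) Z + rank (indeps B) P =
  #|Z| + rank (indeps B) (P :\: Z).
Proof.
move=> hB dSP sZP; have hD := dual_is_matroid hB; have mD := indeps_matroid hD.
rewrite (contr_indeps _ hD) (indeps_bases (icontr_matroid mD P)).
have sDE Y : Y \in indeps (dual (S :|: P) B) -> Y \subset P :|: S.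
  by move=> /(indeps_sub hD); rewrite setUC.
have dPS : [disjoint P & S] by rewrite disjoint_sym.
have := rank_icontr_disjoint mD sDE dPS sZP; have := rank_dual hB S.
have := rank_dual hB (Z :|: S).
have -> : (S :|: P) :\: S = P by rewrite setDUl setDv set0U (setDidPl dPS).
have -> : (S :|: P) :\: (Z :|: S) = P :\: Z.
  apply/setP => z; rewrite !inE.
  by case: (boolP (z \in S)) => [/(disjointFr dSP) -> | _]; case_mem.
have sZSE : Z :|: S \subset S :|: P by rewrite subUset subsetUl (subset_trans sZP (subsetUr S P)).
rewrite (setIidPl (subsetUl S P)) (setIidPl sZSE) cardsU_disjoint ?(disjointWl sZP dPS) //.
lia.
Qed.

End BaseFamilyLinks.

Theorem theorem7 (T : finType) (S P Q : {set T})
  (dSP : [disjoint S & P]) (dPQ : [disjoint P & Q]) (dSQ : [disjoint S & Q])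
  (Bsp Bp Bpq : {set {set T}})
  (hsp : is_matroid (S :|: P) Bsp) (hp : is_matroid P Bp)
  (hpq : is_matroid (P :|: Q) Bpq) :
  [/\ (forall B1sp B1pq : {set {set T}},
         is_matroid (S :|: P) B1sp -> is_matroid (P :|: Q) B1pq ->
         mge (S :|: P) B1sp Bsp -> mge (P :|: Q) B1pq Bpq ->
         mge (S :|: Q) (linkM S Q B1sp B1pq) (linkM S Q Bsp Bpq)),
      mge S (restr Bsp S) (linkP S Bsp Bp) /\ mge S (linkP S Bsp Bp) (contr Bsp S),
      (Bp = restr (dual (S :|: P) Bsp) P -> restr Bsp S = linkP S Bsp Bp) &
      (Bp = contr (dual (S :|: P) Bsp) P -> contr Bsp S = linkP S Bsp Bp)].
Proof.
have mSP := indeps_matroid hsp; have mP := indeps_matroid hp; have mPQ := indeps_matroid hpq.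
have sSP := indeps_sub hsp; have sP := indeps_sub hp.
have mL := ilink_matroid mSP mP S.
rewrite (linkP_bases S hsp hp) (restr_indeps S hsp) (contr_indeps S hsp); split.
- move=> B1sp B1pq h1 h2 ge1 ge2.
  have m1 := indeps_matroid h1; have m2 := indeps_matroid h2.
  rewrite (linkM_bases S Q h1 h2) (linkM_bases S Q hsp hpq).
  apply: (mge_of_rank_ge (ilink_matroid m1 m2 _) (ilink_matroid mSP mPQ _)).
  apply: rank_ge_ilink => //.
    apply: (rank_ge_of_mge m1 mSP (indeps_sub h1) sSP).
    by rewrite (bases_indeps h1) (bases_indeps hsp).
  apply: (rank_ge_of_mge m2 mPQ (indeps_sub h2) (indeps_sub hpq)).
  by rewrite (bases_indeps h2) (bases_indeps hpq).
- split.
    exact: mge_of_rank_ge (irestr_matroid mSP S) mL (rank_ge_irestr_ilink mSP mP dSP sP).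
  exact: mge_of_rank_ge mL (icontr_matroid mSP S) (rank_ge_ilink_icontr mSP mP S).
- move=> Bp_dual; congr bases; apply: (irestr_eq_ilink mSP mP dSP sSP sP) => Z sZP.
  by rewrite Bp_dual rank_restr_dual.
- move=> Bp_dual; congr bases; apply: (icontr_eq_ilink mSP mP dSP sSP sP) => Z sZP.
  by rewrite Bp_dual rank_contr_dual.
Qed.
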